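(* Let $f=(f_1,f_2):\mathbb{R}^2\to\mathbb{R}^2$ be smooth, $g=f_1^2+f_2^2$, $\delta>0$ with $\delta^2$ a regular value of $g$ and $P=g^{-1}(\delta^2)\neq\emptyset$. Let $J=\partial(f_1,f_2)/\partial(x_1,x_2)$ and $F_j=\partial(f_j,J)/\partial(x_1,x_2)$, $j=1,2$. Let $T=(-\partial g/\partial x_2,\partial g/\partial x_1)$, a non-vanishing tangent vector field on $P$. For $p\in P$ let $x(t)$ be the integral curve of $T$ in $P$ with $x(0)=p$, and let $\theta$ be a smooth function near $0$ with $f(x(t))=(\delta\cos\theta(t),\delta\sin\theta(t))$. Suppose $p$ is a critical point of $f|P:P\to S^1(\delta)$. Then $$\operatorname{sign}(\theta''(0))=\operatorname{sign}\big(f_1F_1+f_2F_2\big)(p).$$ In particular, $p\in P$ is a non-degenerate critical point of $f|P$ if and only if $J(p)=0$ and $(f_1F_1+f_2F_2)(p)\neq0$.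
   Context: $S^1(\delta)$ is the circle of radius $\delta$ centered at the origin. *)

From Stdlib Require Import Reals List.
From Coquelicot Require Import Coquelicot.
Open Scope R_scope.

Definition pd1 (h : R -> R -> R) : R -> R -> R :=
  fun x y => Derive (fun t => h t y) x.
Definition pd2 (h : R -> R -> R) : R -> R -> R :=
  fun x y => Derive (fun t => h x t) y.

(* Iterated partial derivative along a list of directions
   (false = d/dx1, true = d/dx2). *)
Fixpoint iterD (l : list bool) (h : R -> R -> R) : R -> R -> R :=
  match l with
  | nil => h
  | b :: l' => (if b then pd2 else pd1) (iterD l' h)
  end.

Definition smooth2 (h : R -> R -> R) : Prop :=
  forall (l : list bool) (x y : R),
    ex_derive (fun t => iterD l h t y) x /\
    ex_derive (fun t => iterD l h x t) y /\
    continuous (fun q : R * R => iterD l h (fst q) (snd q)) (x, y).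

Definition smooth_on_interval (e : R) (th : R -> R) : Prop :=
  forall (n : nat) (t : R), -e < t < e -> ex_derive (Derive_n th n) t.

Definition jac (a b : R -> R -> R) : R -> R -> R :=
  fun x y => pd1 a x y * pd2 b x y - pd2 a x y * pd1 b x y.

Definition sgn (r : R) : R :=
  match Rcase_abs r with
  | left _ => -1
  | right _ => if Req_EM_T r 0 then 0 else 1
  end.

(* p = (p1,p2) is a critical point of the restriction of f = (f1,f2) to the
   regular level set P = g^{-1}(c): the differential of f vanishes on the
   tangent space T_p P = ker dg_p. *)
Definition crit_restr (f1 f2 g : R -> R -> R) (p1 p2 : R) : Prop :=
  forall v1 v2 : R,
    pd1 g p1 p2 * v1 + pd2 g p1 p2 * v2 = 0 ->
    pd1 f1 p1 p2 * v1 + pd2 f1 p1 p2 * v2 = 0 /\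
    pd1 f2 p1 p2 * v1 + pd2 f2 p1 p2 * v2 = 0.

(* Non-degenerate critical point of f|P, expressed in the local charts
   t |-> x(t) of P (integral curve of the non-vanishing field T) and the
   angle coordinate theta on S^1(delta): critical and theta''(0) <> 0. *)
Definition nondeg_crit_chart (f1 f2 g : R -> R -> R) (p1 p2 : R)
    (th : R -> R) : Prop :=
  crit_restr f1 f2 g p1 p2 /\ Derive (Derive th) 0 <> 0.

(* Along an integral curve x(t) of T = (-g_y, g_x) the derivative of h(x(t)) is jac g h,
   and for g = f1^2 + f2^2 one computes jac g f1 = -2 f2 J, jac g f2 = 2 f1 J and
   jac g J = 2 (f1 F1 + f2 F2).  Hence f(x(t))' = 2 J (-f2, f1), which forces
   theta' = 2 J(x(t)) and theta''(0) = 4 (f1 F1 + f2 F2)(p).  Since T spans the tangent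
   line of P and f does not vanish on P, p is critical for f|P exactly when J(p) = 0. *)
From Stdlib Require Import Reals List Lra Psatz.
From Coquelicot Require Import Coquelicot.
Open Scope R_scope.

Lemma DL_pol_1 f x y dx dy :
  DL_pol 1 f x y dx dy = f x y + pd1 f x y * dx + pd2 f x y * dy.
Proof.
  unfold DL_pol, differential. cbn -[partial_derive Binomial.C].
  replace (Binomial.C 0 0) with 1 by (unfold Binomial.C; simpl; field).
  replace (Binomial.C 1 0) with 1 by (unfold Binomial.C; simpl; field).
  replace (Binomial.C 1 1) with 1 by (unfold Binomial.C; simpl; field).
  change (partial_derive 0 0 f x y) with (f x y).
  change (partial_derive 1 0 f x y) with (pd1 f x y).
  change (partial_derive 0 1 f x y) with (pd2 f x y).
  field.
Qed.

Section Smooth2.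

Variable h : R -> R -> R.
Hypothesis h_smooth : smooth2 h.

Lemma smooth2_continuity_2d_pt l u v : continuity_2d_pt (iterD l h) u v.
Proof. apply continuity_2d_pt_filterlim, (h_smooth l u v). Qed.

Lemma smooth2_ex_diff_n_2 l u v : ex_diff_n (iterD l h) 2 u v.
Proof.
  destruct (h_smooth l u v) as [Ex [Ey _]].
  destruct (h_smooth (false :: l) u v) as [Exx [Exy _]].
  destruct (h_smooth (true :: l) u v) as [Eyx [Eyy _]].
  split; [apply smooth2_continuity_2d_pt |].
  split; [exact Ex |]. split; [exact Ey |].
  split; [split; [apply (smooth2_continuity_2d_pt (false :: l)) |]
         | split; [apply (smooth2_continuity_2d_pt (true :: l)) |]];
    (split; [assumption |]); (split; [assumption |]); split; (split; [| exact I]).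
  - apply (smooth2_continuity_2d_pt (false :: false :: l)).
  - apply (smooth2_continuity_2d_pt (true :: false :: l)).
  - apply (smooth2_continuity_2d_pt (false :: true :: l)).
  - apply (smooth2_continuity_2d_pt (true :: true :: l)).
Qed.

Lemma smooth2_differentiable_pt_lim l x y :
  differentiable_pt_lim (iterD l h) x y (pd1 (iterD l h) x y) (pd2 (iterD l h) x y).
Proof.
  intros eps.
  destruct (Taylor_Lagrange_2d (iterD l h) 1 x y) as [D [d Hd]].
  { exists (mkposreal 1 Rlt_0_1). intros; apply smooth2_ex_diff_n_2. }
  pose proof (Rabs_pos D) as HD0.
  set (e := eps / (Rabs D + 1)).
  assert (He : e * (Rabs D + 1) = eps) by (unfold e; field; lra).
  assert (Hr : 0 < Rmin d e).
  { apply Rmin_pos; [apply cond_pos | apply Rdiv_lt_0_compat; [apply cond_pos | lra]]. }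
  exists (mkposreal _ Hr). intros u v Hu Hv. simpl in Hu, Hv.
  set (m := Rmax (Rabs (u - x)) (Rabs (v - y))).
  assert (Hm : m <= e).
  { apply Rmax_lub; apply Rlt_le; eapply Rlt_le_trans; [exact Hu | apply Rmin_r
                                                      | exact Hv | apply Rmin_r]. }
  assert (Hm0 : 0 <= m) by (eapply Rle_trans; [apply Rabs_pos | apply Rmax_l]).
  specialize (Hd u v (Rlt_le_trans _ _ _ Hu (Rmin_l _ _)) (Rlt_le_trans _ _ _ Hv (Rmin_l _ _))).
  rewrite DL_pol_1 in Hd. fold m in Hd.
  set (k := iterD l h) in *.
  replace (k u v - k x y - (pd1 k x y * (u - x) + pd2 k x y * (v - y)))
    with (k u v - (k x y + pd1 k x y * (u - x) + pd2 k x y * (v - y))) by ring.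
  eapply Rle_trans; [exact Hd |]. simpl. fold m.
  apply Rle_trans with (Rabs D * e * m).
  - pose proof (Rle_abs D).
    apply Rle_trans with (Rabs D * m * m); [nra |].
    apply Rmult_le_compat_r; [exact Hm0 |]. apply Rmult_le_compat_l; assumption.
  - rewrite <- He. apply Rmult_le_compat_r; [exact Hm0 |].
    assert (0 <= e) by lra. nra.
Qed.

Lemma is_derive_comp_smooth2 l (u1 u2 : R -> R) t d1 d2 :
  is_derive u1 t d1 -> is_derive u2 t d2 ->
  is_derive (fun s => iterD l h (u1 s) (u2 s)) t
    (pd1 (iterD l h) (u1 t) (u2 t) * d1 + pd2 (iterD l h) (u1 t) (u2 t) * d2).
Proof.
  intros H1 H2. apply is_derive_Reals, derivable_pt_lim_comp_2d;
    [apply smooth2_differentiable_pt_lim | apply is_derive_Reals; assumption ..].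
Qed.

End Smooth2.

Lemma is_derive_det2 (A B C D : R -> R) t dA dB dC dD :
  is_derive A t dA -> is_derive B t dB -> is_derive C t dC -> is_derive D t dD ->
  is_derive (fun s => A s * B s - C s * D s) t (dA * B t + A t * dB - (dC * D t + C t * dD)).
Proof.
  intros HA HB HC HD.
  apply (is_derive_minus (fun s => A s * B s) (fun s => C s * D s));
    apply (is_derive_mult (K := R_AbsRing)); auto using Rmult_comm.
Qed.

Section Jacobian.

Variables a b : R -> R -> R.
Hypotheses (a_smooth : smooth2 a) (b_smooth : smooth2 b).

Lemma pd1_jac x y :
  pd1 (jac a b) x y = pd1 (pd1 a) x y * pd2 b x y + pd1 a x y * pd1 (pd2 b) x y
    - (pd1 (pd2 a) x y * pd1 b x y + pd2 a x y * pd1 (pd1 b) x y).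
Proof.
  unfold pd1 at 1. unfold jac. apply is_derive_unique. auto_derive.
  - repeat split; first [apply (a_smooth (false :: nil) x y) | apply (a_smooth (true :: nil) x y)
      | apply (b_smooth (false :: nil) x y) | apply (b_smooth (true :: nil) x y)].
  - unfold pd1, pd2. ring.
Qed.

Lemma pd2_jac x y :
  pd2 (jac a b) x y = pd2 (pd1 a) x y * pd2 b x y + pd1 a x y * pd2 (pd2 b) x y
    - (pd2 (pd2 a) x y * pd1 b x y + pd2 a x y * pd2 (pd1 b) x y).
Proof.
  unfold pd2 at 1. unfold jac. apply is_derive_unique. auto_derive.
  - repeat split; first [apply (a_smooth (false :: nil) x y) | apply (a_smooth (true :: nil) x y)
      | apply (b_smooth (false :: nil) x y) | apply (b_smooth (true :: nil) x y)].
  - unfold pd1, pd2. ring.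
Qed.


(* Instead of proving [smooth2 (jac a b)], differentiate its four factors along the curve. *)
Lemma is_derive_comp_jac (u1 u2 : R -> R) t d1 d2 :
  is_derive u1 t d1 -> is_derive u2 t d2 ->
  is_derive (fun s => jac a b (u1 s) (u2 s)) t
    (pd1 (jac a b) (u1 t) (u2 t) * d1 + pd2 (jac a b) (u1 t) (u2 t) * d2).
Proof.
  intros H1 H2.
  replace (pd1 (jac a b) (u1 t) (u2 t) * d1 + pd2 (jac a b) (u1 t) (u2 t) * d2) with
    ((pd1 (pd1 a) (u1 t) (u2 t) * d1 + pd2 (pd1 a) (u1 t) (u2 t) * d2) * pd2 b (u1 t) (u2 t)
     + pd1 a (u1 t) (u2 t) * (pd1 (pd2 b) (u1 t) (u2 t) * d1 + pd2 (pd2 b) (u1 t) (u2 t) * d2)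
     - ((pd1 (pd2 a) (u1 t) (u2 t) * d1 + pd2 (pd2 a) (u1 t) (u2 t) * d2) * pd1 b (u1 t) (u2 t)
        + pd2 a (u1 t) (u2 t) * (pd1 (pd1 b) (u1 t) (u2 t) * d1 + pd2 (pd1 b) (u1 t) (u2 t) * d2)))
    by (rewrite pd1_jac, pd2_jac; ring).
  apply (is_derive_det2 (fun s => pd1 a (u1 s) (u2 s)) (fun s => pd2 b (u1 s) (u2 s))
                        (fun s => pd2 a (u1 s) (u2 s)) (fun s => pd1 b (u1 s) (u2 s)));
    [apply (is_derive_comp_smooth2 a a_smooth (false :: nil))
    | apply (is_derive_comp_smooth2 b b_smooth (true :: nil))
    | apply (is_derive_comp_smooth2 a a_smooth (true :: nil))
    | apply (is_derive_comp_smooth2 b b_smooth (false :: nil))]; assumption.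
Qed.

End Jacobian.

Lemma is_derive_along_flow (g h : R -> R -> R) (u1 u2 : R -> R) t :
  is_derive (fun s => h (u1 s) (u2 s)) t
    (pd1 h (u1 t) (u2 t) * - pd2 g (u1 t) (u2 t) + pd2 h (u1 t) (u2 t) * pd1 g (u1 t) (u2 t)) ->
  is_derive (fun s => h (u1 s) (u2 s)) t (jac g h (u1 t) (u2 t)).
Proof.
  intros H. replace (jac g h (u1 t) (u2 t)) with
    (pd1 h (u1 t) (u2 t) * - pd2 g (u1 t) (u2 t) + pd2 h (u1 t) (u2 t) * pd1 g (u1 t) (u2 t)).
  - exact H.
  - unfold jac. ring.
Qed.

Lemma orthogonal_of_det_zero a b c d v1 v2 :
  a <> 0 \/ b <> 0 -> a * v1 + b * v2 = 0 -> a * d - b * c = 0 -> c * v1 + d * v2 = 0.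
Proof.
  intros Hab Hv Hdet.
  destruct Hab as [Ha | Hb]; [apply (Rmult_eq_reg_l a) | apply (Rmult_eq_reg_l b)]; auto.
  - replace (a * (c * v1 + d * v2)) with (c * (a * v1 + b * v2) + v2 * (a * d - b * c))
      by ring.
    rewrite Hv, Hdet. ring.
  - replace (b * (c * v1 + d * v2)) with (d * (a * v1 + b * v2) - v1 * (a * d - b * c))
      by ring.
    rewrite Hv, Hdet. ring.
Qed.

Lemma crit_restr_iff_jac_zero (f1 f2 g : R -> R -> R) p1 p2 :
  pd1 g p1 p2 <> 0 \/ pd2 g p1 p2 <> 0 ->
  crit_restr f1 f2 g p1 p2 <-> jac g f1 p1 p2 = 0 /\ jac g f2 p1 p2 = 0.
Proof.
  intros Hreg. unfold crit_restr, jac. split.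
  - intros Hc. destruct (Hc (- pd2 g p1 p2) (pd1 g p1 p2)) as [E1 E2]; [ring |].
    split; [rewrite <- E1 | rewrite <- E2]; ring.
  - intros [E1 E2] v1 v2 Hv. split; eapply orthogonal_of_det_zero; eassumption.
Qed.

Section SumOfSquares.

Variables f1 f2 : R -> R -> R.
Hypotheses (f1_smooth : smooth2 f1) (f2_smooth : smooth2 f2).

Let g := fun x y => f1 x y ^ 2 + f2 x y ^ 2.

Lemma pd1_sum_sq x y : pd1 g x y = 2 * (f1 x y * pd1 f1 x y + f2 x y * pd1 f2 x y).
Proof.
  unfold pd1, g. apply is_derive_unique. auto_derive.
  - split; [apply (f1_smooth nil x y) | split; [apply (f2_smooth nil x y) | exact I]].
  - ring.
Qed.

Lemma pd2_sum_sq x y : pd2 g x y = 2 * (f1 x y * pd2 f1 x y + f2 x y * pd2 f2 x y).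
Proof.
  unfold pd2, g. apply is_derive_unique. auto_derive.
  - split; [apply (f1_smooth nil x y) | split; [apply (f2_smooth nil x y) | exact I]].
  - ring.
Qed.

Lemma jac_sum_sq h x y :
  jac g h x y = 2 * (f1 x y * jac f1 h x y + f2 x y * jac f2 h x y).
Proof. unfold jac. rewrite pd1_sum_sq, pd2_sum_sq. ring. Qed.

Lemma jac_sum_sq_l x y : jac g f1 x y = - 2 * f2 x y * jac f1 f2 x y.
Proof. rewrite jac_sum_sq. unfold jac. ring. Qed.

Lemma jac_sum_sq_r x y : jac g f2 x y = 2 * f1 x y * jac f1 f2 x y.
Proof. rewrite jac_sum_sq. unfold jac. ring. Qed.

End SumOfSquares.

Lemma Derive_polar_angle (r : R) (th : R -> R) t k :
  r <> 0 -> ex_derive th t ->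
  is_derive (fun s => r * cos (th s)) t (- r * sin (th t) * k) ->
  is_derive (fun s => r * sin (th s)) t (r * cos (th t) * k) ->
  Derive th t = k.
Proof.
  intros Hr Hth Hc Hs.
  assert (Hc' : is_derive (fun s => r * cos (th s)) t (- r * sin (th t) * Derive th t))
    by (auto_derive; [exact Hth | change (fun x => th x) with th; ring]).
  assert (Hs' : is_derive (fun s => r * sin (th s)) t (r * cos (th t) * Derive th t))
    by (auto_derive; [exact Hth | change (fun x => th x) with th; ring]).
  pose proof (is_derive_unique _ _ _ Hc) as Ec.
  pose proof (is_derive_unique _ _ _ Hs) as Es.
  rewrite (is_derive_unique _ _ _ Hc') in Ec.
  rewrite (is_derive_unique _ _ _ Hs') in Es.
  pose proof (sin2_cos2 (th t)) as Hsc. unfold Rsqr in Hsc.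
  apply (Rmult_eq_reg_l r); [|exact Hr].
  (* multiply the two equations by [- sin] and [cos] and add them *)
  transitivity (- sin (th t) * (- r * sin (th t) * Derive th t)
                + cos (th t) * (r * cos (th t) * Derive th t)).
  - transitivity (r * Derive th t * (sin (th t) * sin (th t) + cos (th t) * cos (th t)));
      [rewrite Hsc |]; ring.
  - rewrite Ec, Es.
    transitivity (r * k * (sin (th t) * sin (th t) + cos (th t) * cos (th t)));
      [| rewrite Hsc]; ring.
Qed.

Lemma scaled_rotation_eq0 a b k :
  a ^ 2 + b ^ 2 <> 0 -> (- 2 * b * k = 0 /\ 2 * a * k = 0 <-> k = 0).
Proof.
  intros Hab. split; [intros [E1 E2] | intros ->; split; ring].
  apply (Rmult_eq_reg_l (a ^ 2 + b ^ 2)); [| exact Hab].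
  transitivity ((a * (2 * a * k) - b * (- 2 * b * k)) / 2); [field |].
  rewrite E1, E2. field.
Qed.

Lemma sgn_mult_pos c s : 0 < c -> sgn (c * s) = sgn s.
Proof.
  intros Hc. unfold sgn.
  destruct (Rcase_abs (c * s)), (Rcase_abs s);
    try destruct (Req_EM_T (c * s) 0); try destruct (Req_EM_T s 0); nra.
Qed.

Lemma locally_open_interval eps t : -eps < t < eps -> locally t (fun s => -eps < s < eps).
Proof.
  intros [H1 H2]. apply filter_and; [apply (open_gt (-eps)) | apply (open_lt eps)]; assumption.
Qed.

Lemma is_derive_ext_interval (u v : R -> R) eps t l :
  (forall s, -eps < s < eps -> u s = v s) -> -eps < t < eps ->
  is_derive u t l -> is_derive v t l.
Proof.
  intros Huv Ht. apply is_derive_ext_loc.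
  exact (filter_imp _ _ Huv (locally_open_interval eps t Ht)).
Qed.

Section AngleAlongFlow.

Variables (f1 f2 : R -> R -> R) (r eps : R) (x1 x2 th : R -> R).
Hypotheses (f1_smooth : smooth2 f1) (f2_smooth : smooth2 f2) (r_neq0 : r <> 0).

Let g := fun x y => f1 x y ^ 2 + f2 x y ^ 2.

Hypothesis x_flow : forall t, -eps < t < eps ->
  is_derive x1 t (- pd2 g (x1 t) (x2 t)) /\ is_derive x2 t (pd1 g (x1 t) (x2 t)).
Hypothesis th_derivable : forall t, -eps < t < eps -> ex_derive th t.
Hypothesis f_polar : forall t, -eps < t < eps ->
  f1 (x1 t) (x2 t) = r * cos (th t) /\ f2 (x1 t) (x2 t) = r * sin (th t).

Lemma Derive_angle_along_flow t :
  -eps < t < eps -> Derive th t = 2 * jac f1 f2 (x1 t) (x2 t).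
Proof.
  intros Ht. destruct (x_flow t Ht) as [D1 D2]. destruct (f_polar t Ht) as [E1 E2].
  apply (Derive_polar_angle r); [exact r_neq0 | exact (th_derivable t Ht) | ..];
    (eapply is_derive_ext_interval; [intros s Hs; apply (f_polar s Hs) | exact Ht |]).
  - replace (- r * sin (th t) * (2 * jac f1 f2 (x1 t) (x2 t))) with (jac g f1 (x1 t) (x2 t))
      by (unfold g; rewrite jac_sum_sq_l, E2 by assumption; ring).
    apply is_derive_along_flow, (is_derive_comp_smooth2 f1 f1_smooth nil); assumption.
  - replace (r * cos (th t) * (2 * jac f1 f2 (x1 t) (x2 t))) with (jac g f2 (x1 t) (x2 t))
      by (unfold g; rewrite jac_sum_sq_r, E1 by assumption; ring).
    apply is_derive_along_flow, (is_derive_comp_smooth2 f2 f2_smooth nil); assumption.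
Qed.

Lemma Derive2_angle_along_flow :
  0 < eps ->
  Derive (Derive th) 0 =
  4 * (f1 (x1 0) (x2 0) * jac f1 (jac f1 f2) (x1 0) (x2 0)
       + f2 (x1 0) (x2 0) * jac f2 (jac f1 f2) (x1 0) (x2 0)).
Proof.
  intros Heps. assert (H0 : -eps < 0 < eps) by lra.
  rewrite (Derive_ext_loc _ (fun t => 2 * jac f1 f2 (x1 t) (x2 t))) by
    (apply filter_imp with (2 := locally_open_interval eps 0 H0);
     exact Derive_angle_along_flow).
  destruct (x_flow 0 H0) as [D1 D2].
  assert (DJ : is_derive (fun t : R => jac f1 f2 (x1 t) (x2 t)) 0
                 (jac g (jac f1 f2) (x1 0) (x2 0))).
  { apply is_derive_along_flow, is_derive_comp_jac; assumption. }
  rewrite Derive_scal, (is_derive_unique _ _ _ DJ).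
  unfold g. rewrite jac_sum_sq by assumption. ring.
Qed.

End AngleAlongFlow.

Theorem lemma5p2 :
  forall (f1 f2 : R -> R -> R) (delta : R),
    smooth2 f1 -> smooth2 f2 ->
    0 < delta ->
    let g := fun x y => f1 x y ^ 2 + f2 x y ^ 2 in
    (* delta^2 is a regular value of g *)
    (forall x y, g x y = delta ^ 2 -> pd1 g x y <> 0 \/ pd2 g x y <> 0) ->
    (* P = g^{-1}(delta^2) is nonempty *)
    (exists x y, g x y = delta ^ 2) ->
    let J := jac f1 f2 in
    let F1 := jac f1 J in
    let F2 := jac f2 J in
    forall (p1 p2 : R), g p1 p2 = delta ^ 2 ->
    forall (eps : R) (x1 x2 th : R -> R),
      0 < eps ->
      (* x = (x1,x2) is the integral curve of T = (-dg/dx2, dg/dx1) in P *)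
      x1 0 = p1 -> x2 0 = p2 ->
      (forall t, -eps < t < eps ->
         is_derive x1 t (- pd2 g (x1 t) (x2 t)) /\
         is_derive x2 t (pd1 g (x1 t) (x2 t)) /\
         g (x1 t) (x2 t) = delta ^ 2) ->
      (* theta smooth near 0 with f(x(t)) = (delta cos theta, delta sin theta) *)
      smooth_on_interval eps th ->
      (forall t, -eps < t < eps ->
         f1 (x1 t) (x2 t) = delta * cos (th t) /\
         f2 (x1 t) (x2 t) = delta * sin (th t)) ->
      (crit_restr f1 f2 g p1 p2 ->
         sgn (Derive (Derive th) 0) =
         sgn (f1 p1 p2 * F1 p1 p2 + f2 p1 p2 * F2 p1 p2)) /\
      (nondeg_crit_chart f1 f2 g p1 p2 th <->
         J p1 p2 = 0 /\ f1 p1 p2 * F1 p1 p2 + f2 p1 p2 * F2 p1 p2 <> 0).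
Proof.
  intros f1 f2 delta Hs1 Hs2 Hd g Hreg _ J F1 F2 p1 p2 Hp eps x1 x2 th Heps
    Hx1 Hx2 Hcurve Hth Hf.
  assert (Hth2 : Derive (Derive th) 0 = 4 * (f1 p1 p2 * F1 p1 p2 + f2 p1 p2 * F2 p1 p2)).
  { rewrite <- Hx1, <- Hx2. apply (Derive2_angle_along_flow f1 f2 delta eps); try assumption.
    - lra.
    - intros t Ht. split; apply (Hcurve t Ht).
    - intros t Ht. exact (Hth 0%nat t Ht). }
  assert (Hcrit : crit_restr f1 f2 g p1 p2 <-> J p1 p2 = 0).
  { rewrite crit_restr_iff_jac_zero by auto.
    unfold g. rewrite jac_sum_sq_l, jac_sum_sq_r by assumption.
    apply scaled_rotation_eq0. unfold g in Hp. rewrite Hp. apply pow_nonzero. lra. }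
  split.
  - intros _. rewrite Hth2. apply sgn_mult_pos. lra.
  - unfold nondeg_crit_chart. rewrite Hcrit, Hth2.
    split; intros [A B]; split; auto; intros C; apply B; lra.
Qed.
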